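(* Let $D$ be an integral domain and $\star$ a semistar operation on $D$. The following are equivalent: (i) $D$ is a P$\star$MD; (ii) for every overring $T$ of $D$ and every semistar operation $\star'$ on $T$ such that $T$ is $(\star,\star')$-linked to $D$, $T$ is $(\star,\star')$-flat over $D$; (iii) for every overring $T$ of $D$, $T$ is $(\star,\ell_{\star,T})$-flat over $D$; (iv) every overring of $D$ that is $t$-linked to $(D,\star)$ is $t$-flat over $(D,\star)$; (v) every overring $T$ of $D$ that is $(\star,d_T)$-linked to $D$ is $(\star,d_T)$-flat over $D$.
   Context: Let $D$ be an integral domain with quotient field $K$. $\overline{\mathbf F}(D)$ denotes the set of all nonzero $D$-submodules of $K$ and $\mathbf f(D)$ the set of nonzero finitely generated $D$-submodules of $K$. A semistar operation on $D$ is a map $\star:\overline{\mathbf F}(D)\to\overline{\mathbf F}(D)$, $E\mapsto E^\star$, such that for all $0\ne x\in K$ and $E,F\in\overline{\mathbf F}(D)$: (1) $(xE)^\star=xE^\star$; (2) $E\subseteq F\Rightarrow E^\star\subseteq F^\star$; (3) $E\subseteq E^\star$ and $(E^\star)^\star=E^\star$. $\star_f$ is defined by $E^{\star_f}=\bigcup\{F^\star:F\in\mathbf f(D),F\subseteq E\}$. A nonzero ideal $I$ of $D$ is a quasi-$\star$-ideal if $I^\star\cap D=I$; a quasi-$\star$-prime is a prime quasi-$\star$-ideal. An overring of $D$ is a ring $T$ with $D\subseteq T\subseteq K$; the same notions are defined on $T$. $d_T$ is the identity operation on $T$; $v_T$ is $E\mapsto(T:_K(T:_KE))$ and $t_T:=(v_T)_f$.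 $T$ is $(\star,\star')$-linked to $D$ if for every nonzero finitely generated ideal $F\subseteq D$ with $F^\star=D^\star$ one has $(FT)^{\star'}=T^{\star'}$; $T$ is $t$-linked to $(D,\star)$ if it is $(\star,t_T)$-linked to $D$. $T$ is $(\star,\star')$-flat over $D$ if it is $(\star,\star')$-linked to $D$ and $D_{Q\cap D}=T_Q$ for every quasi-$\star'_f$-prime ideal $Q$ of $T$; $T$ is $t$-flat over $(D,\star)$ if it is $(\star,t_T)$-flat over $D$. The semistar operation $\ell_{\star,T}$ on $T$ is $E^{\ell_{\star,T}}=\bigcap\{ET_{D\setminus P}:P$ a quasi-$\star_f$-prime of $D\}$ (equal to $K$ if there are none). $D$ is a P$\star$MD if every $F\in\mathbf f(D)$ satisfies $(FF^{-1})^{\star_f}=D^\star$, where $F^{-1}=(D:_KF)$. *)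

(* The quotient field K of D is an abstract field; D and
   all its overrings are subrings of K, and D-submodules of K are
   predicates on K (Prop-valued subsets). *)
From mathcomp Require Import all_boot all_order all_algebra.
Set Implicit Arguments. Unset Strict Implicit. Unset Printing Implicit Defensive.
Import GRing.Theory.
Local Open Scope ring_scope.

Section Defs.
Variable K : fieldType.

Definition kset := K -> Prop.

Definition subset (A B : kset) : Prop := forall x, A x -> B x.
Definition seteq (A B : kset) : Prop := forall x, A x <-> B x.

Definition is_subring (R : kset) : Prop :=
  [/\ R 0, R 1, (forall x y, R x -> R y -> R (x + y)),
      (forall x, R x -> R (- x)) & (forall x y, R x -> R y -> R (x * y))].

Definition is_quotient_field (D : kset) : Prop :=
  forall x, exists a b, [/\ D a, D b, b != 0 & x = a / b].

Definition overring (D T : kset) : Prop := is_subring T /\ subset D T.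

Definition submodule (R E : kset) : Prop :=
  [/\ E 0, (forall x y, E x -> E y -> E (x + y)) &
      (forall r x, R r -> E x -> E (r * x))].

Definition nonzero (E : kset) : Prop := exists x, x != 0 /\ E x.

Definition Fbar (R E : kset) : Prop := submodule R E /\ nonzero E.

Definition mulset (A B : kset) : kset := fun x =>
  exists s : seq (K * K),
    (forall p, p \in s -> A p.1 /\ B p.2) /\ x = \sum_(p <- s) p.1 * p.2.

Definition span (R : kset) (s : seq K) : kset :=
  mulset (fun y => y \in s) R.

Definition fgen (R E : kset) : Prop :=
  (exists s : seq K, seteq E (span R s)) /\ nonzero E.

Definition scale (x : K) (E : kset) : kset := fun y => exists e, E e /\ y = x * e.

Definition semistar (R : kset) (star : kset -> kset) : Prop :=
  [/\ (forall E, Fbar R E -> Fbar R (star E)),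
      (forall x E, x != 0 -> Fbar R E -> seteq (star (scale x E)) (scale x (star E))),
      (forall E F, Fbar R E -> Fbar R F -> subset E F -> subset (star E) (star F)),
      (forall E, Fbar R E -> subset E (star E)) &
      (forall E, Fbar R E -> seteq (star (star E)) (star E))].

Definition star_f (R : kset) (star : kset -> kset) : kset -> kset :=
  fun E x => exists F, [/\ fgen R F, subset F E & star F x].

Definition ideal (R I : kset) : Prop := subset I R /\ submodule R I /\ nonzero I.

Definition quasi_ideal (R : kset) (star : kset -> kset) (I : kset) : Prop :=
  ideal R I /\ seteq (fun x => star I x /\ R x) I.

Definition is_prime (R P : kset) : Prop :=
  (exists x, R x /\ ~ P x) /\
  (forall a b, R a -> R b -> P (a * b) -> P a \/ P b).

Definition quasi_prime (R : kset) (star : kset -> kset) (P : kset) : Prop :=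
  quasi_ideal R star P /\ is_prime R P.

Definition frac (A S P : kset) : kset := fun x =>
  exists a s, [/\ A a, S s, ~ P s & x = a / s].

Definition loc (R P : kset) : kset := frac R R P.

Definition d_op : kset -> kset := fun E => E.
Definition colon (R E : kset) : kset := fun x => forall e, E e -> R (x * e).
Definition v_op (T : kset) : kset -> kset := fun E => colon T (colon T E).
Definition t_op (T : kset) : kset -> kset := star_f T (v_op T).

Definition linked (D : kset) (star : kset -> kset) (T : kset) (star' : kset -> kset) : Prop :=
  forall F, fgen D F -> subset F D -> seteq (star F) (star D) ->
    seteq (star' (mulset F T)) (star' T).

Definition flat (D : kset) (star : kset -> kset) (T : kset) (star' : kset -> kset) : Prop :=
  linked D star T star' /\
  forall Q, quasi_prime T (star_f T star') Q ->
    seteq (loc D (fun x => Q x /\ D x)) (loc T Q).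

Definition ell_op (D : kset) (star : kset -> kset) (T : kset) : kset -> kset :=
  fun E x => forall P, quasi_prime D (star_f D star) P -> mulset E (frac T D P) x.

Definition PstarMD (D : kset) (star : kset -> kset) : Prop :=
  forall F, fgen D F -> seteq (star_f D star (mulset F (colon D F))) (star D).

End Defs.

(* If D is a P*MD and a, b are in D, the ideal (a, b)(a, b)^-1 contains a
   finitely generated G with G^* = D^*.  Linkedness keeps G out of every
   quasi-prime Q of T, which produces g in (a, b)^-1 with ag or bg outside Q,
   so a/b is rewritten with a denominator in D \ Q: this is the flatness.
   Conversely, if 1 is not in (F F^-1)^{*_f}, Zorn gives a quasi-*_f-prime P
   containing F F^-1, and Chevalley's extension theorem (via Kaplansky's
   polynomial lemma) gives a valuation overring V of D_P whose maximal ideal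
   m contains P.  V is linked to D for each of d, t and ell, and m is a
   quasi-prime for each of them, so flatness gives V = V_m = D_(m /\ D).
   Taking a generator a of F of least value and a common denominator c in
   D \ m of the y/a (y in F), c/a lies in F^-1, so c = a (c/a) lies in
   F F^-1, which is contained in m: a contradiction. *)
From mathcomp Require Import all_boot all_order all_algebra.
From mathcomp Require classical_sets.
From mathcomp Require Import ring.
From Stdlib Require Import Classical.
Set Implicit Arguments. Unset Strict Implicit. Unset Printing Implicit Defensive.
Import GRing.Theory.
Local Open Scope ring_scope.

Section Sets.
Variable K : fieldType.
Implicit Types (A B C R : kset K) (F : kset K -> Prop) (x y : K).

Definition chain F := forall X Y, F X -> F Y -> subset X Y \/ subset Y X.

Definition bigunion F : kset K := fun x => exists X, F X /\ X x.

Lemma chain_bigunion_seq F (s : seq K) : chain F -> (exists X, F X) ->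
  (forall y, y \in s -> bigunion F y) -> exists X, F X /\ forall y, y \in s -> X y.
Proof.
move=> tot [X0 FX0]; elim: s => [|y s IH] hs; first by exists X0.
have [X1 [FX1 X1y]] := hs y (mem_head _ _).
have [X2 [FX2 X2s]] : exists X, F X /\ forall z, z \in s -> X z.
  by apply: IH => z zs; apply: hs; rewrite in_cons zs orbT.
case: (tot _ _ FX1 FX2) => h.
  by exists X2; split => // z; rewrite in_cons => /orP [/eqP ->|]; [exact: h|exact: X2s].
by exists X1; split => // z; rewrite in_cons => /orP [/eqP ->|zs] //; exact/h/X2s.
Qed.

Lemma chain_bigunion2 F a b : chain F -> bigunion F a -> bigunion F b ->
  exists X, [/\ F X, X a & X b].
Proof.
move=> tot ha hb.
have hne : exists X, F X by case: ha => X [FX _]; exists X.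
have hs : forall y, y \in [:: a; b] -> bigunion F y.
  by move=> y; rewrite !inE => /orP [] /eqP ->.
have [X [FX Xab]] := chain_bigunion_seq tot hne hs.
by exists X; split => //; apply: Xab; rewrite !inE eqxx ?orbT.
Qed.

(* The empty set is added to the candidates so that Zorn's lemma may be fed
   the empty chain. *)
Lemma zorn_maximal (P : kset K -> Prop) A0 : P A0 -> (exists x, A0 x) ->
  (forall F, (forall X, F X -> P X) -> chain F -> (exists X, F X) -> P (bigunion F)) ->
  exists M, P M /\ forall B, P B -> subset M B -> subset B M.
Proof.
move=> PA0 [a A0a] Pchain.
pose Q X := (forall x, ~ X x) \/ P X.
have [M [QM Mmax]] : exists M, Q M /\ forall B, classical_sets.proper M B -> ~ Q B.
  apply: classical_sets.Zorn_bigcup => F FQ tot.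
  case: (classic (exists X x, F X /\ X x)) => [[X0 [x0 [FX0 X0x0]]]|hne]; last first.
    by left => x [X FX Xx]; apply: hne; exists X, x.
  right; pose F' X := F X /\ exists x, X x.
  have -> : classical_sets.bigcup F id = bigunion F'.
    apply: boolp.funext => x; apply: boolp.propext; split.
      by case=> X FX Xx; exists X; split => //; split => //; exists x.
    by case=> X [[FX _] Xx]; exists X.
  apply: Pchain.
  - by move=> X [FX [x Xx]]; case: (FQ X FX) => // h; case: (h x).
  - by move=> X Y [FX _] [FY _]; apply: tot.
  - by exists X0; split => //; exists x0.
have maxM B : P B -> subset M B -> subset B M.
  move=> PB MB x Bx; apply: NNPP => nMx; apply: (Mmax B); last by right.
  by split => // BM; apply: nMx; apply: BM.
case: QM => [Mempty|PM]; last by exists M.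
by exfalso; apply: (Mempty a); apply: (maxM A0) => // x /Mempty.
Qed.

Lemma mulset_subset A B C : C 0 -> (forall x y, C x -> C y -> C (x + y)) ->
  (forall a b, A a -> B b -> C (a * b)) -> subset (mulset A B) C.
Proof.
move=> C0 Cadd Cab x [s [hs ->]]; elim: s hs => [|p s IH] hs.
  by rewrite big_nil.
rewrite big_cons; apply: Cadd.
  by have [] := hs p (mem_head _ _); exact: Cab.
by apply: IH => q qs; apply: hs; rewrite in_cons qs orbT.
Qed.

Lemma mulset0 A B : mulset A B 0.
Proof. by exists [::]; rewrite big_nil. Qed.

Lemma mulsetD A B x y : mulset A B x -> mulset A B y -> mulset A B (x + y).
Proof.
move=> [s [hs ->]] [t [ht ->]]; exists (s ++ t); rewrite big_cat; split => // p.
by rewrite mem_cat => /orP [] ?; [apply: hs | apply: ht].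
Qed.

Lemma mulset1 A B a b : A a -> B b -> mulset A B (a * b).
Proof.
move=> Aa Bb; exists [:: (a, b)]; rewrite big_seq1; split => // p.
by rewrite inE => /eqP ->.
Qed.

Lemma mulset_mono A A' B B' :
  subset A A' -> subset B B' -> subset (mulset A B) (mulset A' B').
Proof.
move=> AA BB; apply: mulset_subset; [exact: mulset0|exact: mulsetD|].
by move=> a b Aa Bb; apply: mulset1; [apply: AA|apply: BB].
Qed.

Lemma mulset_notin A B C x : C 0 -> (forall x y, C x -> C y -> C (x + y)) ->
  mulset A B x -> ~ C x -> exists a b, [/\ A a, B b & ~ C (a * b)].
Proof.
move=> C0 Cadd mx nCx; apply: NNPP => hn; apply: nCx.
apply: (mulset_subset C0 Cadd) mx => a b Aa Bb; apply: NNPP => nC; apply: hn.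
by exists a, b.
Qed.

Lemma subring0 R : is_subring R -> R 0. Proof. by case. Qed.
Lemma subring1 R : is_subring R -> R 1. Proof. by case. Qed.
Lemma subringD R : is_subring R -> forall x y, R x -> R y -> R (x + y). Proof. by case. Qed.
Lemma subringN R : is_subring R -> forall x, R x -> R (- x). Proof. by case. Qed.
Lemma subringM R : is_subring R -> forall x y, R x -> R y -> R (x * y). Proof. by case. Qed.
Lemma subringB R : is_subring R -> forall x y, R x -> R y -> R (x - y).
Proof. by move=> hR x y Rx Ry; apply: subringD => //; apply: subringN. Qed.

Lemma subring_sum R (I : Type) (r : seq I) (P : pred I) (f : I -> K) :
  is_subring R -> (forall i, P i -> R (f i)) -> R (\sum_(i <- r | P i) f i).
Proof. by move=> hR h; apply: big_ind => //; [exact: subring0|exact: subringD]. Qed.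

Lemma Fbar_self R : is_subring R -> Fbar R R.
Proof.
move=> hR; split; last by exists 1; split; [exact: oner_neq0|exact: subring1].
by split; [exact: subring0|exact: subringD|exact: subringM].
Qed.

Lemma mulset_subset_submod R A B : submodule R B -> subset A R -> subset (mulset A B) B.
Proof.
case=> B0 Badd Bmul AR; apply: mulset_subset => // a b Aa Bb.
by apply: Bmul => //; apply: AR.
Qed.

Lemma mulset_submod R A B : submodule R B -> submodule R (mulset A B).
Proof.
case=> _ _ Bmul; split; [exact: mulset0|exact: mulsetD|].
move=> r x Rr; apply: (@mulset_subset _ _ (fun x => mulset A B (r * x))).
- by rewrite mulr0; exact: mulset0.
- by move=> a b ha hb; rewrite mulrDr; exact: mulsetD.
- by move=> a b Aa Bb; rewrite mulrCA; apply: mulset1 => //; apply: Bmul.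
Qed.

Lemma span_mem R s y : R 1 -> y \in s -> span R s y.
Proof. by move=> R1 ys; rewrite -[y]mulr1; apply: mulset1. Qed.

Lemma span_submod R s : is_subring R -> submodule R (span R s).
Proof. by move=> hR; apply: mulset_submod; case: (Fbar_self hR). Qed.

Lemma span_mono R s t : R 1 -> {subset s <= t} -> subset (span R s) (span R t).
Proof. by move=> R1 st; apply: mulset_mono => // y; apply: st. Qed.

Lemma span_subset_submod R s E : submodule R E -> {in s, forall y, E y} -> subset (span R s) E.
Proof.
case=> E0 Eadd Emul h; apply: mulset_subset => // y r ys Rr.
by rewrite mulrC; apply: Emul => //; apply: h.
Qed.

Lemma span_ring_mono R T s : subset R T -> subset (span R s) (span T s).
Proof. by move=> RT; apply: mulset_mono. Qed.

Lemma seteq_sym A B : seteq A B -> seteq B A.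
Proof. by move=> h x; split => /h. Qed.

Lemma submod_seteq R A B : seteq A B -> submodule R A -> submodule R B.
Proof.
move=> h [A0 Aadd Amul]; split.
- by apply/h.
- by move=> x y /h Ax /h Ay; apply/h; apply: Aadd.
- by move=> r x Rr /h Ax; apply/h; apply: Amul.
Qed.

Lemma fgen_Fbar R E : is_subring R -> fgen R E -> Fbar R E.
Proof.
move=> hR [[s hs] nz]; split => //; apply: (submod_seteq (seteq_sym hs)).
exact: span_submod.
Qed.

Lemma span_fgen R s y : is_subring R -> y \in s -> y != 0 -> fgen R (span R s).
Proof.
move=> hR ys y0; split; first by exists s.
by exists y; split => //; apply: span_mem => //; exact: subring1.
Qed.

Lemma span_Fbar R s y : is_subring R -> y \in s -> y != 0 -> Fbar R (span R s).
Proof. by move=> hR ys y0; apply: fgen_Fbar => //; exact: span_fgen ys y0. Qed.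

Lemma fgen_span R E : fgen R E ->
  exists s, seteq E (span R s) /\ exists2 y, y \in s & y != 0.
Proof.
case=> [[s hs] [x [x0 Ex]]]; exists s; split => //.
apply: NNPP => hn; apply: (negP x0); apply/eqP.
apply: (@mulset_subset _ _ (fun x => x = 0) erefl _ _ x (proj1 (hs x) Ex)).
  by move=> ? ? -> ->; rewrite addr0.
move=> y r ys _; case: (eqVneq y 0) => [->|y0]; first by rewrite mul0r.
by exfalso; apply: hn; exists y.
Qed.

Lemma colon_span R s c : is_subring R -> {in s, forall y, R (c * y)} -> colon R (span R s) c.
Proof.
move=> hR hc e; apply: (@mulset_subset _ _ (fun e => R (c * e))).
- by rewrite mulr0; exact: subring0.
- by move=> u v hu hv; rewrite mulrDr; apply: subringD.
- by move=> y r ys Rr; rewrite mulrA; apply: subringM => //; apply: hc.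
Qed.

Lemma fgen_mulset R T G : is_subring R -> is_subring T -> subset R T ->
  fgen R G -> fgen T (mulset G T).
Proof.
move=> hR hT RT [[s hs] [g [g0 Gg]]]; split; last first.
  by exists g; split => //; rewrite -[g]mulr1; apply: mulset1 => //; exact: subring1.
exists s => x; split.
  apply: mulset_subset; [exact: mulset0|exact: mulsetD|] => u t /hs Gu Tt.
  have [_ _ Sm] := span_submod s hT; rewrite mulrC; apply: Sm => //.
  exact: span_ring_mono Gu.
apply: mulset_mono => // y ys; apply/hs; apply: span_mem => //; exact: subring1.
Qed.

End Sets.

Section Star.
Variable K : fieldType.
Implicit Types (E F G R : kset K) (x : K).

Lemma star_f_seteq R op E E' : seteq E E' -> seteq (star_f R op E) (star_f R op E').
Proof. by move=> h x; split; case=> F [fF FE Fx]; exists F; split => // y /FE /h. Qed.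

Variables (D : kset K) (star : kset K -> kset K).
Hypotheses (hD : is_subring D) (hstar : semistar D star).

Lemma star_Fbar E : Fbar D E -> Fbar D (star E). Proof. by case: hstar => h *; apply: h. Qed.
Lemma star_mono E F : Fbar D E -> Fbar D F -> subset E F -> subset (star E) (star F).
Proof. by case: hstar => _ _ h *; apply: h. Qed.
Lemma star_ext E : Fbar D E -> subset E (star E). Proof. by case: hstar => _ _ _ h *; apply: h. Qed.
Lemma star_idem E : Fbar D E -> seteq (star (star E)) (star E).
Proof. by case: hstar => _ _ _ _ h *; apply: h. Qed.
Lemma star_scale x E : x != 0 -> Fbar D E -> seteq (star (scale x E)) (scale x (star E)).
Proof. by case: hstar => _ h *; apply: h. Qed.

Lemma star_submod E : Fbar D E -> submodule D (star E).
Proof. by move/star_Fbar; case. Qed.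

Lemma star1 : star D 1.
Proof. by apply: star_ext; [exact: Fbar_self|exact: subring1]. Qed.

Lemma star_subset_star G E : Fbar D G -> Fbar D E ->
  subset G (star E) -> subset (star G) (star E).
Proof.
move=> FG FE GE x /(star_mono FG (star_Fbar FE) GE) h; exact: (proj1 (star_idem FE x) h).
Qed.

Lemma starD_of_star1 G : Fbar D G -> subset G D -> star G 1 -> seteq (star G) (star D).
Proof.
move=> FG GD G1 x; split; first by apply: star_mono => //; exact: Fbar_self.
apply: star_subset_star => //; first exact: Fbar_self.
move=> r Dr; rewrite -[r]mulr1; have [_ _ Sm] := star_submod FG; exact: Sm.
Qed.

Lemma Fbar_scale b E : b != 0 -> Fbar D E -> Fbar D (scale b E).
Proof.
move=> b0 [[E0 Eadd Emul] [e [e0 Ee]]]; split.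
  split.
  - by exists 0; rewrite mulr0.
  - move=> ? ? [u [Eu ->]] [v [Ev ->]]; exists (u + v); rewrite mulrDr.
    by split => //; apply: Eadd.
  - move=> r ? Dr [u [Eu ->]]; exists (r * u); rewrite mulrCA.
    by split => //; apply: Emul.
by exists (b * e); split; [rewrite mulf_neq0|exists e].
Qed.

Lemma star_f_subset E : Fbar D E -> subset (star_f D star E) (star E).
Proof. by move=> FE x [G [fG GE Gx]]; apply: (star_mono (fgen_Fbar hD fG) FE GE Gx). Qed.

End Star.

Section Forward.
Variable K : fieldType.
Implicit Types (F G R T Q : kset K) (x : K).

Lemma prime_not1 T Q : is_prime T Q -> submodule T Q -> ~ Q 1.
Proof.
move=> [[x [Tx nQx]] _] [_ _ Qm] Q1; apply: nQx; rewrite -[x]mulr1; exact: Qm.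
Qed.

Lemma mulset_subset_ideal T Q G : submodule T Q -> subset G Q -> subset (mulset G T) Q.
Proof.
move=> [Q0 Qa Qm] GQ; apply: mulset_subset => // a b Ga Tb.
by rewrite mulrC; apply: Qm => //; apply: GQ.
Qed.

Lemma mul_colon_subset R F : is_subring R -> subset (mulset F (colon R F)) R.
Proof.
move=> hR; apply: mulset_subset; [exact: subring0|exact: subringD|].
by move=> a b Fa Cb; rewrite mulrC; apply: Cb.
Qed.

Variables (D : kset K) (star : kset K -> kset K).
Hypotheses (hD : is_subring D) (hK : is_quotient_field D) (hstar : semistar D star).
Hypothesis pmd : PstarMD D star.

Lemma PstarMD_fgen_subset F : fgen D F ->
  exists G, [/\ fgen D G, subset G (mulset F (colon D F)) & seteq (star G) (star D)].
Proof.
move=> fF; have [G [fG GI G1]] := proj2 (pmd fF 1) (star1 hD hstar).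
exists G; split => //; apply: (starD_of_star1 hD hstar (fgen_Fbar hD fG)) => // x /GI.
exact: mul_colon_subset.
Qed.

Variables (T : kset K) (star' : kset K -> kset K) (Q : kset K).
Hypotheses (oT : overring D T) (T1 : star' T 1) (lk : linked D star T star')
  (qQ : quasi_prime T (star_f T star') Q).

(* For F = (a, b), linkedness gives 1 in (G T)^{star'}, so G is not inside
   the quasi-prime Q. *)
Lemma PstarMD_pair_avoid a b : D a -> D b -> b != 0 ->
  exists g, [/\ D (a * g), D (b * g) & ~ Q (a * g) \/ ~ Q (b * g)].
Proof.
have [hT DT] := oT; have [[[QT [hQ _]] Qq] Qp] := qQ; have [Q0 Qa Qm] := hQ.
move=> Da Db b0; set F := span D [:: a; b].
have fF : fgen D F by apply: (span_fgen (y := b)) => //; rewrite !inE eqxx orbT.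
have [G [fG GI GD]] := PstarMD_fgen_subset fF.
have GsubD : subset G D by move=> x /GI; exact: mul_colon_subset.
have [z [Gz nQz]] : exists z, G z /\ ~ Q z.
  apply: NNPP => hn; apply: (prime_not1 Qp hQ); apply/Qq.
  split; last exact: subring1.
  exists (mulset G T); split.
  - exact: fgen_mulset hD hT DT fG.
  - by apply: mulset_subset_ideal => // x Gx; apply: NNPP => nQx; apply: hn; exists x.
  - by apply/(lk fG GsubD GD).
have [f [g [Ff Cg nQfg]]] := mulset_notin Q0 Qa (GI z Gz) nQz.
have C0 : (fun f => Q (f * g)) 0 by rewrite /= mul0r.
have Ca u v : Q (u * g) -> Q (v * g) -> Q ((u + v) * g).
  by move=> hu hv; rewrite mulrDl; apply: Qa.
have [y [r [ys Dr nQ]]] := mulset_notin C0 Ca Ff nQfg.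
have nQyg : ~ Q (y * g).
  by move=> Qyg; apply: nQ; rewrite /= -mulrA mulrCA; apply: Qm => //; exact: DT.
have D1 := subring1 hD.
exists g; split.
- by rewrite mulrC; apply: Cg; apply: span_mem; rewrite ?inE ?eqxx.
- by rewrite mulrC; apply: Cg; apply: span_mem; rewrite ?inE ?eqxx ?orbT.
- by move: ys; rewrite !inE => /orP [] /eqP <-; [left|right].
Qed.

Lemma PstarMD_loc_eq : seteq (loc D (fun x => Q x /\ D x)) (loc T Q).
Proof.
have [hT DT] := oT; have [[[_ [hQ _]] _] Qp] := qQ; have [Q0 _ Qm] := hQ.
move=> x; split.
  case=> a [s [Da Ds nQs ->]]; exists a, s; split => //; [exact: DT|exact: DT|].
  by move=> Qs; apply: nQs.
case=> t [u [Tt Tu nQu ->]].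
case: (eqVneq t 0) => [-> | t0].
  exists 0, 1; rewrite !mul0r; split => //; [exact: subring0|exact: subring1|].
  by case=> Q1 _; exact: prime_not1 Qp hQ Q1.
have u0 : u != 0 by apply/eqP => u0; apply: nQu; rewrite u0.
have [a [b [Da Db b0 hab]]] := hK (t / u).
have [g [Dag Dbg hg]] := PstarMD_pair_avoid Da Db b0.
have tb : t * b = u * a.
  apply: (mulIf (invr_neq0 b0)).
  by rewrite -mulrA divff // mulr1 -mulrA -hab mulrCA divff // mulr1.
have nQbg : ~ Q (b * g).
  move=> Qbg; case: hg => // nQag.
  have : Q (u * (a * g)) by rewrite mulrA -tb -mulrA; apply: Qm.
  by case/(proj2 Qp _ _ Tu (DT _ Dag)).
exists (a * g), (b * g); split => //; first by case.
have g0 : g != 0 by apply/eqP => g0; apply: nQbg; rewrite g0 mulr0.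
by rewrite hab -mulf_div divff // mulr1.
Qed.

End Forward.

Lemma PstarMD_flat (K : fieldType) (D T : kset K) (star star' : kset K -> kset K) :
  is_subring D -> is_quotient_field D -> semistar D star -> PstarMD D star ->
  overring D T -> star' T 1 -> linked D star T star' -> flat D star T star'.
Proof.
move=> hD hK hstar pmd oT T1 lk; split => // Q qQ.
exact: (PstarMD_loc_eq hD hK hstar pmd oT T1 lk qQ).
Qed.

Section Kaplansky.
Variable K : fieldType.
Variables (V J : kset K).
Hypotheses (hV : is_subring V) (hJ : submodule V J) (JV : subset J V) (nJ1 : ~ J 1).

Definition coefs_in (p : {poly K}) := forall i, J p`_i.

Lemma coefs_in0 : coefs_in 0.
Proof. by move=> i; rewrite coef0; case: hJ. Qed.

Lemma coefs_inD p q : coefs_in p -> coefs_in q -> coefs_in (p + q).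
Proof. by move=> hp hq i; rewrite coefD; case: hJ => _ Jadd _; apply: Jadd. Qed.

Lemma coefs_inZ c p : V c -> coefs_in p -> coefs_in (c *: p).
Proof. by move=> Vc hp i; rewrite coefZ; case: hJ => _ _ Jmul; apply: Jmul. Qed.

Lemma coefs_inN p : coefs_in p -> coefs_in (- p).
Proof.
by move=> hp; rewrite -scaleN1r; apply: coefs_inZ => //; apply: subringN (subring1 hV).
Qed.

Lemma coefs_inC c : J c -> coefs_in c%:P.
Proof. by move=> Jc i; rewrite coefC; case: eqP => // _; case: hJ. Qed.

Lemma coefs_inZXn c k : J c -> coefs_in (c *: 'X^k).
Proof.
by move=> Jc i; rewrite coefZ coefXn; case: eqP => _; rewrite ?mulr1 ?mulr0 //; case: hJ.
Qed.

Lemma coefs_in_sum (I : Type) (r : seq I) (P : pred I) (F : I -> {poly K}) :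
  (forall i, P i -> coefs_in (F i)) -> coefs_in (\sum_(i <- r | P i) F i).
Proof. by move=> h; apply: big_ind => //; [exact: coefs_in0|exact: coefs_inD]. Qed.

(* With m = deg q <= n = deg p and a the leading coefficient of p, the
   relation q(1/x) = 1 multiplied by a x^n reads
   a x^n (1 - q_0) = a sum_(1 <= j <= m) q_j x^(n - j), which eliminates the
   leading term of (1 - q_0) p(x) = 1 - q_0. *)
Lemma coefs_in_size_reduce x (p q : {poly K}) : x != 0 -> coefs_in p -> coefs_in q ->
  p.[x] = 1 -> q.[x^-1] = 1 -> (2 <= size q)%N -> (size q <= size p)%N ->
  exists p', [/\ coefs_in p', p'.[x] = 1 & (size p' < size p)%N].
Proof.
move=> x0 Jp Jq hp hq sq sqp.
set m := (size q).-1; set n := (size p).-1.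
have hsq : size q = m.+1 by rewrite /m; case: (size q) sq.
have hsp : size p = n.+1 by rewrite /n; case: (size p) sqp sq => //; case: (size q).
have m1 : (1 <= m)%N by rewrite /m; case: (size q) sq => // [[]].
have mn : (m <= n)%N by rewrite -ltnS -hsq -hsp.
set q0 := q`_0; set a := p`_n.
set S := \sum_(1 <= j < m.+1) q`_j *: 'X^(n - j).
exists ((1 - q0) *: (p - a *: 'X^n) + q0%:P + a *: S); split.
- apply: coefs_inD; first apply: coefs_inD.
  + apply: coefs_inZ; first exact: (subringB hV (subring1 hV) (JV (Jq 0))).
    by apply: coefs_inD => //; apply: coefs_inN; apply: coefs_inZXn; apply: Jp.
  + by apply: coefs_inC; apply: Jq.
  + apply: coefs_inZ; first exact: (JV (Jp _)).
    by apply: coefs_in_sum => j _; apply: coefs_inZXn; apply: Jq.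
- have hsum : \sum_(1 <= j < m.+1) q`_j * x^-1 ^+ j = 1 - q0.
    move: hq; rewrite horner_coef hsq -(big_mkord xpredT (fun i => q`_i * x^-1 ^+ i)).
    rewrite (big_ltn (ltn0Sn _)) /= expr0 mulr1 => <-.
    by rewrite [q0 + _]addrC addrK.
  have hS : S.[x] = x ^+ n * (1 - q0).
    rewrite /S horner_sum -hsum mulr_sumr; apply: eq_big_nat => j /andP [j1 jm].
    rewrite hornerZ hornerXn exprB ?unitfE //; last by rewrite -ltnS (leq_trans jm) // ltnS.
    by rewrite exprVn mulrCA.
  rewrite !hornerE hS hp /=; ring.
- rewrite hsp ltnS; apply/leq_sizeP => i ni.
  rewrite !coefD !coefZ coefB coefZ coefXn coefC coef_sum.
  have -> : p`_i - a * (i == n)%:R = 0.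
    case: (eqVneq i n) => [->|ne]; first by rewrite mulr1 subrr.
    by rewrite mulr0 subr0; apply: nth_default; rewrite hsp ltn_neqAle eq_sym ne ni.
  rewrite mulr0 add0r.
  have n1 : (1 <= n)%N := leq_trans m1 mn.
  have -> : (i == 0%N) = false by apply/negbTE; rewrite -lt0n (leq_trans n1 ni).
  rewrite add0r big1_seq ?mulr0 // => j /andP [_]; rewrite mem_index_iota => /andP [j1 jm].
  rewrite coefZ coefXn; case: eqP => [eij|]; last by rewrite mulr0.
  by exfalso; move: ni; rewrite eij leqNgt ltn_subrL j1 n1.
Qed.

(* Kaplansky's lemma; induction on deg p + deg q, reducing the larger one. *)
Lemma kaplansky_coefs_in x (p q : {poly K}) : x != 0 -> coefs_in p -> coefs_in q ->
  p.[x] = 1 -> q.[x^-1] = 1 -> False.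
Proof.
move=> x0 Jp Jq hp hq.
have [N leN] : exists N, (size p + size q <= N)%N by exists (size p + size q).
elim: N x p q x0 Jp Jq hp hq leN => [|N IH] x p q x0 Jp Jq hp hq leN.
  move: leN; rewrite leqn0 addn_eq0 => /andP [/eqP sp _].
  move: sp => /eqP; rewrite size_poly_eq0 => /eqP sp.
  by move: hp; rewrite sp horner0 => /eqP; rewrite eq_sym oner_eq0.
have const r y : coefs_in r -> r.[y] = 1 -> (size r <= 1)%N -> False.
  move=> Jr hr sr; apply: nJ1; move: hr; rewrite (size1_polyC sr) hornerC => <-; exact: Jr.
case: (leqP (size q) 1) => sq; first exact: (const q x^-1).
case: (leqP (size p) 1) => sp; first exact: (const p x).
case: (leqP (size q) (size p)) => sqp.
  have [p' [Jp' hp' sp']] := coefs_in_size_reduce x0 Jp Jq hp hq sq sqp.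
  apply: (IH x p' q) => //; rewrite -ltnS (leq_trans _ leN) // ltn_add2r; exact: sp'.
have hp' : p.[x^-1^-1] = 1 by rewrite invrK.
have [q' [Jq' hq' sq']] := coefs_in_size_reduce (invr_neq0 x0) Jq Jp hq hp' sp (ltnW sqp).
apply: (IH x p q') => //; rewrite -ltnS (leq_trans _ leN) // ltn_add2l; exact: sq'.
Qed.

End Kaplansky.

Section Chevalley.
Variable K : fieldType.
Implicit Types (A B R : kset K) (F : kset K -> Prop) (x y : K).
Variables (D P : kset K).
Hypotheses (hD : is_subring D) (PD : subset P D) (hP : submodule D P) (Pp : is_prime D P).

Lemma notin_prime_neq0 s : ~ P s -> s != 0.
Proof. by move=> nPs; apply/eqP => s0; apply: nPs; rewrite s0; case: hP. Qed.

Lemma notin_primeM s t : D s -> D t -> ~ P s -> ~ P t -> ~ P (s * t).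
Proof. by move=> Ds Dt ns nt /(proj2 Pp _ _ Ds Dt) []. Qed.

Lemma frac_subring T : is_subring T -> subset D T -> is_subring (frac T D P).
Proof.
move=> hT DT; have nP1 := prime_not1 Pp hP; have D1 := subring1 hD.
split.
- by exists 0, 1; rewrite mul0r; split => //; exact: subring0.
- by exists 1, 1; rewrite divr1; split => //; exact: subring1.
- move=> _ _ [a [s [Ta Ds ns ->]]] [b [t [Tb Dt nt ->]]].
  exists (a * t + b * s), (s * t); split.
  + by apply: subringD => //; apply: subringM => //; apply: DT.
  + exact: subringM.
  + exact: notin_primeM.
  + by rewrite addf_div //; apply: notin_prime_neq0.
- move=> _ [a [s [Ta Ds ns ->]]]; exists (- a), s; split => //; last by rewrite mulNr.
  exact: subringN.
- move=> _ _ [a [s [Ta Ds ns ->]]] [b [t [Tb Dt nt ->]]].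
  exists (a * b), (s * t); split; [exact: subringM|exact: subringM|exact: notin_primeM|].
  by rewrite mulf_div.
Qed.

Lemma subset_frac T : subset T (frac T D P).
Proof.
move=> x Tx; exists x, 1; rewrite divr1; split => //; first exact: subring1.
exact: prime_not1 Pp hP.
Qed.

Lemma loc_mulset_not1 : ~ mulset P (loc D P) 1.
Proof.
move=> m1; pose Ploc z := exists p s, [/\ P p, D s, ~ P s & z = p / s].
have [P0 Padd Pmul] := hP.
have [p [s [Pp' Ds ns e]]] : Ploc 1.
  apply: (@mulset_subset _ _ _ Ploc _ _ _ 1 m1).
  - by exists 0, 1; rewrite mul0r; split => //; [exact: subring1|exact: prime_not1 Pp hP].
  - move=> _ _ [p [s [Pp' Ds ns ->]]] [q [t [Pq Dt nt ->]]].
    exists (p * t + q * s), (s * t); split; [|exact: subringM|exact: notin_primeM|].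
      by apply: Padd; rewrite mulrC; apply: Pmul.
    by rewrite addf_div //; apply: notin_prime_neq0.
  - move=> p _ Pp' [a [s [Da Ds ns ->]]]; exists (p * a), s; split => //; last by rewrite mulrA.
    by rewrite mulrC; apply: Pmul.
have s0 := notin_prime_neq0 ns; apply: ns.
by have -> : s = p by apply: (mulIf (invr_neq0 s0)); rewrite divff // e.
Qed.

Definition dominating R := [/\ is_subring R, subset (loc D P) R & ~ mulset P R 1].

Lemma dominating_overring R : dominating R -> overring D R.
Proof. by case=> hR lR _; split => // x Dx; apply: lR; apply: subset_frac. Qed.

Lemma dominating_bigunion F : (forall X, F X -> dominating X) -> chain F ->
  (exists X, F X) -> dominating (bigunion F).
Proof.
move=> Fdom tot [X0 FX0].
have two a b : bigunion F a -> bigunion F b ->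
    exists X, [/\ F X, is_subring X, X a & X b].
  move=> ha hb; have [X [FX Xa Xb]] := chain_bigunion2 tot ha hb.
  by exists X; split => //; case: (Fdom X FX).
have [sX0 lX0 _] := Fdom _ FX0.
split.
- split.
  + by exists X0; split => //; exact: subring0.
  + by exists X0; split => //; exact: subring1.
  + move=> a b ha hb; have [X [FX sX Xa Xb]] := two a b ha hb.
    by exists X; split => //; apply: subringD.
  + move=> a [X [FX Xa]]; have [sX _ _] := Fdom X FX.
    by exists X; split => //; apply: subringN.
  + move=> a b ha hb; have [X [FX sX Xa Xb]] := two a b ha hb.
    by exists X; split => //; apply: subringM.
- by move=> x lx; exists X0; split => //; apply: lX0.
- move=> [s [hs e]].
  have [X [FX Xs]] : exists X, F X /\ forall y, y \in map snd s -> X y.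
    apply: chain_bigunion_seq => //; first by exists X0.
    by move=> y /mapP [pr prs ->]; have [_ h] := hs pr prs.
  have [_ _ nX] := Fdom X FX.
  apply: nX; exists s; split => // pr prs; split; first by have [] := hs pr prs.
  by apply: Xs; rewrite map_f.
Qed.

Section Adjoin.
Variable A : kset K.
Hypothesis hA : is_subring A.

Definition adjoin y : kset K := fun z => exists p : {poly K}, (forall i, A p`_i) /\ z = p.[y].

Lemma adjoin_subring y : is_subring (adjoin y).
Proof.
have A0 := subring0 hA; have A1 := subring1 hA.
split.
- by exists 0; rewrite horner0; split => // i; rewrite coef0.
- by exists 1; rewrite hornerC; split => // i; rewrite coef1; case: (i == 0)%N.
- move=> _ _ [p [hp ->]] [q [hq ->]]; exists (p + q); rewrite hornerD; split => // i.
  by rewrite coefD; apply: subringD.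
- move=> _ [p [hp ->]]; exists (- p); rewrite hornerN; split => // i.
  by rewrite coefN; apply: subringN.
- move=> _ _ [p [hp ->]] [q [hq ->]]; exists (p * q); rewrite hornerM; split => // i.
  by rewrite coefM; apply: subring_sum => // j _; apply: subringM.
Qed.

Lemma subset_adjoin y : subset A (adjoin y).
Proof.
move=> a Aa; exists a%:P; rewrite hornerC; split => // i; rewrite coefC.
by case: (i == 0)%N => //; exact: subring0.
Qed.

Lemma adjoin_mem y : adjoin y y.
Proof.
exists 'X; rewrite hornerX; split => // i; rewrite coefX.
by case: (i == 1)%N; [exact: subring1|exact: subring0].
Qed.

Lemma adjoin_mulset1 y : mulset P (adjoin y) 1 ->
  exists p : {poly K}, coefs_in (mulset P A) p /\ p.[y] = 1.
Proof.
move=> m1; pose E z := exists p : {poly K}, coefs_in (mulset P A) p /\ z = p.[y].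
have [p [hp e]] : E 1.
  apply: (@mulset_subset _ _ _ E _ _ _ 1 m1).
  - by exists 0; rewrite horner0; split => // i; rewrite coef0; exact: mulset0.
  - move=> _ _ [p [hp ->]] [q [hq ->]]; exists (p + q); rewrite hornerD; split => // i.
    by rewrite coefD; apply: mulsetD.
  - move=> a _ Pa [q [hq ->]]; exists (a *: q); rewrite hornerZ; split => // i.
    by rewrite coefZ; apply: mulset1.
by exists p.
Qed.

End Adjoin.

(* Chevalley's extension theorem: a maximal dominating ring A is a valuation
   ring, for if neither x nor 1/x lay in A, maximality would give
   P A[x] = A[x] and P A[1/x] = A[1/x], contradicting Kaplansky's lemma for
   the ideal P A of A. *)
Lemma exists_valring_dominating :
  exists V, dominating V /\ forall x, x != 0 -> V x \/ V x^-1.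
Proof.
have lsub : is_subring (loc D P) by apply: frac_subring => // x.
have dom_loc : dominating (loc D P).
  by split; [exact: lsub|move=> x|exact: loc_mulset_not1].
have [A [[sA lA nA] Amax]] := zorn_maximal dom_loc (ex_intro _ 0 (subring0 lsub))
  dominating_bigunion.
exists A; split => // x x0; apply: NNPP => hx.
have extend y : ~ A y -> exists p : {poly K}, coefs_in (mulset P A) p /\ p.[y] = 1.
  move=> nAy; apply: adjoin_mulset1 => //; apply: NNPP => nm; apply: nAy.
  have dy : dominating (adjoin A y).
    split; [exact: adjoin_subring|move=> z /lA|exact: nm].
    exact: (subset_adjoin sA y).
  exact: (Amax _ dy (subset_adjoin sA y) y (adjoin_mem sA y)).
have [p [Jp hp]] := extend x (fun h => hx (or_introl h)).
have [q [Jq hq]] := extend _ (fun h => hx (or_intror h)).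
have sPA : subset P A.
  by move=> z /PD Dz; apply: lA; apply: subset_frac.
apply: (kaplansky_coefs_in (V := A) (J := mulset P A) _ _ _ _ x0 Jp Jq hp hq) => //.
- by apply: mulset_submod; case: (Fbar_self sA).
- by apply: (@mulset_subset_submod _ A) => //; case: (Fbar_self sA).
Qed.

End Chevalley.

Section QuasiPrime.
Variable K : fieldType.
Implicit Types (B C G H J : kset K) (x y : K).
Variables (D : kset K) (star : kset K -> kset K).
Hypotheses (hD : is_subring D) (hstar : semistar D star).
Variable I : kset K.
Hypotheses (ID : subset I D) (hI : submodule D I) (Inz : nonzero I) (nI1 : ~ star_f D star I 1).

Definition star_proper_over J :=
  [/\ subset I J, subset J D, submodule D J & ~ star_f D star J 1].

Lemma star_proper_over_bigunion (F : kset K -> Prop) :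
  (forall X, F X -> star_proper_over X) -> chain F ->
  (exists X, F X) -> star_proper_over (bigunion F).
Proof.
move=> Fphi tot [X0 FX0]; have [IX0 _ _ _] := Fphi X0 FX0.
split.
- by move=> x Ix; exists X0; split => //; apply: IX0.
- by move=> x [X [FX Xx]]; have [_ XD _ _] := Fphi X FX; apply: XD.
- split.
  + by exists X0; split => //; have [_ _ [] ] := Fphi X0 FX0.
  + move=> a b ha hb; have [X [FX Xa Xb]] := chain_bigunion2 tot ha hb.
    by exists X; split => //; have [_ _ [_ Xadd _] _] := Fphi X FX; apply: Xadd.
  + move=> r a Dr [X [FX Xa]]; have [_ _ [_ _ Xmul] _] := Fphi X FX.
    by exists X; split => //; apply: Xmul.
- move=> [G [fG GU G1]]; have [s [hs _]] := fgen_span fG.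
  have [X [FX Xs]] : exists X, F X /\ forall y, y \in s -> X y.
    apply: chain_bigunion_seq => //; first by exists X0.
    by move=> y ys; apply: GU; apply/hs; apply: span_mem => //; exact: subring1.
  have [_ _ sX nX] := Fphi X FX.
  apply: nX; exists G; split => // x /hs; exact: span_subset_submod.
Qed.

Section Maximal.
Variable M : kset K.
Hypotheses (phiM : star_proper_over M)
  (Mmax : forall B, star_proper_over B -> subset M B -> subset B M).

Lemma notin_maximal_neq0 y : ~ M y -> y != 0.
Proof. by move=> nMy; apply/eqP => y0; apply: nMy; rewrite y0; case: phiM => _ _ []. Qed.

Lemma span_cons_Fbar y s : ~ M y -> Fbar D (span D (y :: s)).
Proof. by move/notin_maximal_neq0; apply: span_Fbar => //; exact: mem_head. Qed.

(* M + yD strictly contains M, so 1 lies in its star_f; the finitely many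
   generators involved have the shape m + y r. *)
Lemma maximal_star1_cons y : D y -> ~ M y ->
  exists ms : seq K, (forall m, m \in ms -> M m) /\ star (span D (y :: ms)) 1.
Proof.
have [Mi MD [M0 Madd Mmul] nM1] := phiM; have D1 := subring1 hD.
move=> Dy nMy; pose B z := exists m r, [/\ M m, D r & z = m + y * r].
have [G [fG GB G1]] : star_f D star B 1.
  apply: NNPP => nB; apply: nMy.
  apply: (Mmax (B := B)); last by exists 0, 1; split => //; rewrite mulr1 add0r.
  - split => //.
    + by move=> z Iz; exists z, 0; split; [exact: Mi|exact: subring0|rewrite mulr0 addr0].
    + by move=> _ [m [r [Mm Dr ->]]]; apply: subringD; [|exact: MD|exact: subringM].
    + split.
      * by exists 0, 0; split => //; [exact: subring0|rewrite mulr0 addr0].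
      * move=> _ _ [m [r [Mm Dr ->]]] [m' [r' [Mm' Dr' ->]]].
        exists (m + m'), (r + r'); split; [exact: Madd|exact: subringD|].
        by rewrite mulrDr addrACA.
      * move=> d _ Dd [m [r [Mm Dr ->]]]; exists (d * m), (d * r).
        by split; [exact: Mmul|exact: subringM|rewrite mulrDr mulrCA].
  - by move=> z Mz; exists z, 0; split => //; [exact: subring0|rewrite mulr0 addr0].
have [s [hs _]] := fgen_span fG.
have [ms [hms sms]] : exists ms : seq K, (forall m, m \in ms -> M m) /\
    forall z, z \in s -> span D (y :: ms) z.
  have sB z : z \in s -> B z by move=> zs; apply: GB; apply/hs; apply: span_mem.
  elim: s {hs} sB => [|z s IH] hz; first by exists [::].
  have [ms [hms sms]] := IH (fun w ws => hz w (ltac:(by rewrite in_cons ws orbT))).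
  have [m [r [Mm Dr ->]]] := hz z (mem_head _ _).
  exists (m :: ms); split; first by move=> w; rewrite in_cons => /orP [/eqP ->|/hms].
  move=> w; rewrite in_cons => /orP [/eqP ->|ws].
    by apply: mulsetD; [apply: span_mem|apply: mulset1]; rewrite // !inE eqxx ?orbT.
  by apply: (span_mono D1 _ (sms w ws)) => v; rewrite !inE => /orP [->|->]; rewrite ?orbT.
exists ms; split => //.
apply: (star_mono hstar (fgen_Fbar hD fG) (span_cons_Fbar ms nMy)) G1 => x /hs.
exact: (span_subset_submod (span_submod _ hD) sms).
Qed.

Lemma maximal_is_prime : is_prime D M.
Proof.
have [_ _ [M0 Madd Mmul] nM1] := phiM; have D1 := subring1 hD.
split.
  exists 1; split => // M1; apply: nM1; exists (span D [:: 1]); split.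
  - exact: span_fgen (mem_head _ _) (oner_neq0 _).
  - by apply: span_subset_submod => // y; rewrite inE => /eqP ->.
  - apply: (star_ext hstar (span_Fbar hD (mem_head _ _) (oner_neq0 _))).
    by apply: span_mem; rewrite ?inE.
move=> a b Da Db Mab; apply: NNPP => hab.
have nMa : ~ M a by move=> h; apply: hab; left.
have nMb : ~ M b by move=> h; apply: hab; right.
have [msa [hmsa sa]] := maximal_star1_cons Da nMa.
have [msb [hmsb sb]] := maximal_star1_cons Db nMb.
have b0 := notin_maximal_neq0 nMb.
set C := span D ([seq b * z | z <- a :: msa] ++ msb).
have ba_in : b * a \in [seq b * z | z <- a :: msa] ++ msb by rewrite mem_cat map_f ?mem_head.
have ba0 : b * a != 0 by rewrite mulf_neq0 // notin_maximal_neq0.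
have FC : Fbar D C := span_Fbar hD ba_in ba0.
have FA := span_cons_Fbar msa nMa.
have bC : star C b.
  have scC : subset (scale b (span D (a :: msa))) C.
    move=> _ [e [He ->]].
    apply: (@mulset_subset _ _ D (fun e => C (b * e)) _ _ _ e He).
    - by rewrite mulr0; exact: mulset0.
    - by move=> u v hu hv; rewrite mulrDr; exact: mulsetD.
    - by move=> w r ws Dr; rewrite mulrA; apply: mulset1; rewrite // mem_cat map_f.
  have : scale b (star (span D (a :: msa))) b by exists 1; rewrite mulr1.
  move/(proj2 (star_scale hstar b0 FA b)).
  exact: (star_mono hstar (Fbar_scale b0 FA) FC scC).
have spC : subset (span D (b :: msb)) (star C).
  apply: span_subset_submod; first exact: star_submod.
  move=> z; rewrite in_cons => /orP [/eqP ->|zs] //.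
  by apply: (star_ext hstar FC); apply: span_mem; rewrite // mem_cat zs orbT.
apply: nM1; exists C; split; first exact: span_fgen ba_in ba0.
- apply: span_subset_submod => // z; rewrite mem_cat => /orP [/mapP [w ws ->]|/hmsb //].
  move: ws; rewrite in_cons => /orP [/eqP ->|ws]; first by rewrite mulrC.
  by apply: Mmul => //; apply: hmsa.
- exact: (star_subset_star hstar (span_cons_Fbar msb nMb) FC spC).
Qed.

Lemma maximal_quasi : seteq (fun x => star_f D star M x /\ D x) M.
Proof.
have [Mi MD hM nM1] := phiM; have [i0 [i0nz Ii0]] := Inz; have D1 := subring1 hD.
move=> x; split; last first.
  move=> Mx; split; last exact: MD.
  have l2 : i0 \in [:: x; i0] by rewrite !inE eqxx orbT.
  exists (span D [:: x; i0]); split.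
  - exact: span_fgen l2 i0nz.
  - by apply: span_subset_submod => // y; rewrite !inE => /orP [] /eqP ->; [|apply: Mi].
  - by apply: (star_ext hstar (span_Fbar hD l2 i0nz)); apply: span_mem; rewrite ?inE ?eqxx.
case=> [[H [fH HM Hx]] Dx]; apply: NNPP => nMx.
have [ms [hms sx]] := maximal_star1_cons Dx nMx.
have [hs [hH [h0 hs0 h0nz]]] := fgen_span fH.
set C := span D (ms ++ hs).
have h0C : h0 \in ms ++ hs by rewrite mem_cat hs0 orbT.
have FC : Fbar D C := span_Fbar hD h0C h0nz.
have spC : subset (span D (x :: ms)) (star C).
  apply: span_subset_submod; first exact: star_submod.
  move=> w; rewrite in_cons => /orP [/eqP ->|ws].
    apply: (star_mono hstar (fgen_Fbar hD fH) FC _ Hx) => z /hH.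
    by apply: span_mono => // v vs; rewrite mem_cat vs orbT.
  by apply: (star_ext hstar FC); apply: span_mem; rewrite // mem_cat ws.
apply: nM1; exists C; split; first exact: span_fgen h0C h0nz.
- apply: span_subset_submod => // z; rewrite mem_cat => /orP [/hms //|zs].
  by apply: HM; apply/hH; apply: span_mem.
- exact: (star_subset_star hstar (span_cons_Fbar ms nMx) FC spC).
Qed.

End Maximal.

Lemma quasi_prime_exists : exists M, quasi_prime D (star_f D star) M /\ subset I M.
Proof.
have phiI : star_proper_over I by split => // x.
have [x [_ Ix]] := Inz.
have [M [phiM Mmax]] := zorn_maximal phiI (ex_intro _ x Ix) star_proper_over_bigunion.
have [IM MD hM _] := phiM.
exists M; split => //; split; last exact: maximal_is_prime.
split; last exact: maximal_quasi.
by split => //; split => //; have [y [y0 Iy]] := Inz; exists y; split => //; apply: IM.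
Qed.

End QuasiPrime.

Section Valuation.
Variable K : fieldType.
Implicit Types (G V : kset K) (x y : K).

Definition valring V := is_subring V /\ forall x, x != 0 -> V x \/ V x^-1.

Definition nonunits V : kset K := fun x => V x /\ (x = 0 \/ ~ V x^-1).

Variable V : kset K.
Hypothesis vV : valring V.

Lemma nonunits_not1 : ~ nonunits V 1.
Proof.
by case=> _ [/eqP|]; [rewrite oner_eq0|rewrite invr1; apply; exact: subring1 (proj1 vV)].
Qed.

Lemma nonunits0 : nonunits V 0.
Proof. by split; [exact: subring0 (proj1 vV)|left]. Qed.

Lemma nonunits_subset : subset (nonunits V) V.
Proof. by move=> x []. Qed.

Lemma notin_nonunits x : V x -> ~ nonunits V x -> x != 0 /\ V x^-1.
Proof.
move=> Vx nQ; split; first by apply/eqP => x0; apply: nQ; split => //; left.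
by apply: NNPP => h; apply: nQ; split => //; right.
Qed.

Lemma nonunits_submod : submodule V (nonunits V).
Proof.
have [hV val] := vV.
have nonunit_inv x : nonunits V x -> x != 0 -> ~ V x^-1.
  by move=> [_ [->|//]]; rewrite eqxx.
split; first exact: nonunits0.
- move=> x y [Vx hx] [Vy hy]; split; first exact: subringD.
  case: (eqVneq x 0) => [->|x0]; first by rewrite add0r.
  case: (eqVneq y 0) => [->|y0]; first by rewrite addr0.
  case: (eqVneq (x + y) 0) => [->|s0]; [by left|right => Vs].
  have yx0 : y / x != 0 by rewrite mulf_neq0 ?invr_eq0.
  case: (val _ yx0) => h.
    apply: (nonunit_inv x) => //.
    have -> : x^-1 = (1 + y / x) * (x + y)^-1.
      by field; do ?[apply/andP; split]; rewrite ?mulf_neq0 ?invr_eq0.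
    by apply: subringM => //; apply: subringD => //; exact: subring1.
  apply: (nonunit_inv y) => //.
  have -> : y^-1 = (1 + (y / x)^-1) * (x + y)^-1.
    by field; do ?[apply/andP; split]; rewrite ?mulf_neq0 ?invr_eq0.
  by apply: subringM => //; apply: subringD => //; exact: subring1.
- move=> r x Vr [Vx hx]; split; first exact: subringM.
  case: (eqVneq x 0) => [->|x0]; first by rewrite mulr0; left.
  case: (eqVneq r 0) => [->|r0]; first by rewrite mul0r; left.
  right => h; apply: (nonunit_inv x) => //.
  have -> : x^-1 = r * (r * x)^-1.
    by field; do ?[apply/andP; split]; rewrite ?mulf_neq0 ?invr_eq0.
  exact: subringM.
Qed.

Lemma nonunits_prime : is_prime V (nonunits V).
Proof.
have hV := proj1 vV.
split; first by exists 1; split; [exact: subring1|exact: nonunits_not1].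
move=> a b Va Vb Qab; apply: NNPP => h.
have [a0 Vai] := notin_nonunits Va (fun q => h (or_introl q)).
have [b0 Vbi] := notin_nonunits Vb (fun q => h (or_intror q)).
case: Qab => _ [/eqP|]; first by rewrite mulf_eq0 (negPf a0) (negPf b0).
by apply; rewrite invfM; apply: subringM.
Qed.

Lemma valring_min_gen (s : seq K) : (exists2 y, y \in s & y != 0) ->
  exists a, [/\ a \in s, a != 0 & forall y, y \in s -> V (y / a)].
Proof.
have [hV val] := vV.
elim: s => [[y]//|y s IH] hne.
have V1 := subring1 hV.
case: (classic (exists2 z, z \in s & z != 0)) => [hs|hs].
  have [a [as0 a0 ha]] := IH hs.
  have keep_a : V (y / a) -> exists a, [/\ a \in y :: s, a != 0 &
      forall z, z \in y :: s -> V (z / a)].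
    move=> ya; exists a; split => //; first by rewrite in_cons as0 orbT.
    by move=> z; rewrite in_cons => /orP [/eqP ->|]; last exact: ha.
  case: (eqVneq y 0) => [y0|y0].
    by apply: keep_a; rewrite y0 mul0r; exact: subring0.
  have ya0 : y / a != 0 by rewrite mulf_neq0 ?invr_eq0.
  case: (val _ ya0) => h; first exact: keep_a.
  exists y; split => //; first exact: mem_head.
  move=> z; rewrite in_cons => /orP [/eqP ->|zs]; first by rewrite divff.
  have -> : z / y = (z / a) * (y / a)^-1 by field; do ?[apply/andP; split].
  by apply: subringM => //; apply: ha.
have y0 : y != 0.
  by case: hne => z; rewrite in_cons => /orP [/eqP -> //|zs] z0; case: hs; exists z.
exists y; split => //; first exact: mem_head.
move=> z; rewrite in_cons => /orP [/eqP ->|zs]; first by rewrite divff.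
have -> : z = 0 by apply: NNPP => z0; apply: hs; exists z => //; apply/eqP.
by rewrite mul0r; exact: subring0.
Qed.

(* For a generator a of G of least value, 1/a lies in V : G, hence
   x = (x/a) a with x/a in V. *)
Lemma nonunits_v_op G x : fgen V G -> subset G (nonunits V) -> V x ->
  v_op V G x -> nonunits V x.
Proof.
move=> fG GQ Vx vx; have hV := proj1 vV.
have [s [hs hne]] := fgen_span fG.
have [a [as0 a0 ha]] := valring_min_gen hne.
have Ga : G a by apply/hs; apply: span_mem => //; exact: subring1.
have ainv : colon V G a^-1.
  by move=> e /hs; apply: colon_span => // y /ha; rewrite mulrC.
rewrite -(mulfVK a0 x); have [_ _ Qm] := nonunits_submod.
by apply: Qm; [exact: vx|exact: GQ].
Qed.

Lemma nonunits_subset_star_f (op : kset K -> kset K) :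
  (forall G, fgen V G -> subset G (op G)) -> nonzero (nonunits V) ->
  forall x, nonunits V x -> star_f V op (nonunits V) x /\ V x.
Proof.
move=> ext [q0 [q0nz Qq0]] x Qx; have hV := proj1 vV; split; last exact: nonunits_subset.
have l2 : q0 \in [:: x; q0] by rewrite !inE eqxx orbT.
have fG : fgen V (span V [:: x; q0]) := span_fgen hV l2 q0nz.
exists (span V [:: x; q0]); split => //.
- apply: span_subset_submod; first exact: nonunits_submod.
  by move=> y; rewrite !inE => /orP [] /eqP ->.
- by apply: ext => //; apply: span_mem; rewrite ?inE ?eqxx //; exact: subring1.
Qed.

End Valuation.

Section Converse.
Variable K : fieldType.
Implicit Types (F G T V P : kset K) (x y : K).
Variables (D : kset K) (star : kset K -> kset K).
Hypotheses (hD : is_subring D) (hK : is_quotient_field D) (hstar : semistar D star).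

Lemma common_denominator (s : seq K) :
  exists c, [/\ D c, c != 0 & forall y, y \in s -> D (c * y)].
Proof.
elim: s => [|y s [c [Dc c0 hc]]].
  by exists 1; split => //; [exact: subring1|exact: oner_neq0].
have [a [b [Da Db b0 ->]]] := hK y.
exists (c * b); split; [exact: subringM|by rewrite mulf_neq0|].
move=> z; rewrite in_cons => /orP [/eqP ->|zs].
  by rewrite mulrAC -mulrA divfK //; apply: subringM.
by rewrite mulrAC; apply: subringM => //; apply: hc.
Qed.

Lemma mul_colon_ideal F : fgen D F -> ideal D (mulset F (colon D F)).
Proof.
move=> fF; have [s [hs [f0 f0s f0nz]]] := fgen_span fF.
split; first exact: mul_colon_subset.
split.
  apply: mulset_submod; split.
  - by move=> e _; rewrite mul0r; exact: subring0.
  - by move=> u v hu hv e Fe; rewrite mulrDl; apply: subringD => //; [apply: hu|apply: hv].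
  - by move=> r c Dr Cc e Fe; rewrite -mulrA; apply: subringM => //; apply: Cc.
have [c [Dc c0 hc]] := common_denominator s.
exists (f0 * c); split; first by rewrite mulf_neq0.
apply: mulset1; first by apply/hs; apply: span_mem => //; exact: subring1.
by move=> e /hs; apply: colon_span.
Qed.

Lemma loc_eq_mul_colon_not_subset V F : overring D V -> valring V -> fgen D F ->
  seteq (loc D (fun x => nonunits V x /\ D x)) (loc V (nonunits V)) ->
  ~ subset (mulset F (colon D F)) (nonunits V).
Proof.
move=> [_ DV] vV fF hloc IQ; have hV := proj1 vV.
have VL : subset V (loc D (fun x => nonunits V x /\ D x)).
  move=> x Vx; apply/hloc; exists x, 1; rewrite divr1.
  by split => //; [exact: subring1|exact: nonunits_not1].
have [s [hs hne]] := fgen_span fF.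
have [a [as0 a0 ha]] := valring_min_gen vV hne.
have [c [Dc nQc hc]] : exists c, [/\ D c, ~ nonunits V c & forall y, y \in s -> D (c * (y / a))].
  elim: s {hs hne as0} ha => [|y s IH] ha.
    by exists 1; split => //; [exact: subring1|exact: nonunits_not1].
  have [c' [Dc' nQc' hc']] := IH (fun z zs => ha z (ltac:(by rewrite in_cons zs orbT))).
  have [r [t [Dr Dt nQt e]]] := VL _ (ha y (mem_head _ _)).
  have nQt' : ~ nonunits V t by move=> q; apply: nQt; split.
  have t0 : t != 0 by apply/eqP => t0; apply: nQt'; rewrite t0; exact: nonunits0.
  exists (c' * t); split; first exact: subringM.
    by case/(proj2 (nonunits_prime vV) _ _ (DV _ Dc') (DV _ Dt)).
  move=> z; rewrite in_cons => /orP [/eqP ->|zs].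
    by rewrite e mulrAC -mulrA divfK //; apply: subringM.
  by rewrite mulrAC; apply: subringM => //; apply: hc'.
have Cg : colon D F (c / a).
  by move=> e /hs; apply: colon_span => // y /hc; rewrite mulrAC -mulrA.
have Fa : F a by apply/hs; apply: span_mem => //; exact: subring1.
by apply: nQc; have := IQ _ (mulset1 Fa Cg); rewrite mulrC divfK.
Qed.

Lemma prime_subset_nonunits V P : valring V -> subset P V -> ~ mulset P V 1 ->
  subset P (nonunits V).
Proof.
move=> vV PV n1 p Pp; split; first exact: PV.
case: (eqVneq p 0) => [->|p0]; [by left|right => Vpi].
by apply: n1; rewrite -(divff p0); exact: mulset1.
Qed.

Lemma PstarMD_of_valring_loc :
  (forall V P, quasi_prime D (star_f D star) P -> dominating D P V -> valring V ->
     seteq (loc D (fun x => nonunits V x /\ D x)) (loc V (nonunits V))) ->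
  PstarMD D star.
Proof.
move=> H F fF; have [ID [hI Inz]] := mul_colon_ideal fF.
set I := mulset F (colon D F).
have FI : Fbar D I by [].
case: (classic (star_f D star I 1)) => [[G [fG GI G1]]|nI1].
  have GD : subset G D by move=> x /GI /ID.
  have hG := starD_of_star1 hD hstar (fgen_Fbar hD fG) GD G1.
  move=> x; split; last by move/hG => Gx; exists G.
  by move/(star_f_subset hD hstar FI); apply: (star_mono hstar FI (Fbar_self hD) ID).
have [P [qP IP]] := quasi_prime_exists hD hstar ID hI Inz nI1.
have [[[PD [hP _]] _] Pp] := qP.
have [V [dV val]] := exists_valring_dominating hD PD hP Pp.
have vV : valring V by split => //; case: dV.
have oV := dominating_overring hD hP Pp dV; have [_ lV nV] := dV.
exfalso; apply: (loc_eq_mul_colon_not_subset oV vV fF (H V P qP dV vV)).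
move=> x /IP; apply: (prime_subset_nonunits vV) => // p /PD Dp.
by apply: lV; apply: subset_frac.
Qed.

Lemma quasi_prime_avoid P F : quasi_prime D (star_f D star) P -> fgen D F ->
  seteq (star F) (star D) -> exists f, F f /\ ~ P f.
Proof.
move=> [[[PD [hP _]] Pq] Pp] fF hF; apply: NNPP => hn.
apply: (prime_not1 Pp hP); apply/Pq; split; last exact: subring1.
exists F; split => //; last by apply/hF; exact: star1.
by move=> f Ff; apply: NNPP => nPf; apply: hn; exists f.
Qed.

Section Dominating.
Variables (V P : kset K).
Hypotheses (qP : quasi_prime D (star_f D star) P) (dV : dominating D P V) (vV : valring V).

Lemma dominating_linked_d : linked D star V (@d_op K).
Proof.
have [[[PD [hP _]] _] Pp] := qP; have [hV lV _] := dV.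
have [_ DV] := dominating_overring hD hP Pp dV.
move=> F fF FD hF x; rewrite /d_op; split.
  apply: mulset_subset; [exact: subring0|exact: subringD|].
  by move=> a b Fa Vb; apply: subringM => //; apply: DV; apply: FD.
move=> Vx; have [f [Ff nPf]] := quasi_prime_avoid qP fF hF.
have f0 := notin_prime_neq0 hP nPf.
have Vfi : V f^-1.
  by apply: lV; exists 1, f; split; [exact: subring1|exact: FD|exact: nPf|rewrite div1r].
by rewrite -(mulVKf f0 x); apply: mulset1 => //; exact: subringM.
Qed.

Lemma dominating_linked_t : linked D star V (t_op V).
Proof. by move=> F fF FD hF; apply: star_f_seteq; exact: dominating_linked_d. Qed.

Lemma nonunits_nonzero : nonzero (nonunits V).
Proof.
have [[[PD [hP [p [p0 Pp]]]] _] Pp'] := qP; have [_ lV nV] := dV.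
exists p; split => //; apply: (prime_subset_nonunits vV _ nV Pp) => z /PD Dz.
by apply: lV; apply: subset_frac.
Qed.

Lemma nonunits_quasi_prime op : (forall G, fgen V G -> subset G (op G)) ->
  (forall x, V x -> star_f V op (nonunits V) x -> nonunits V x) ->
  quasi_prime V (star_f V op) (nonunits V).
Proof.
move=> ext inner; split; last exact: nonunits_prime.
split.
  split; first exact: nonunits_subset.
  by split; [exact: nonunits_submod|exact: nonunits_nonzero].
move=> x; split; first by case=> h Vx; apply: inner.
exact: (nonunits_subset_star_f vV ext nonunits_nonzero).
Qed.

Lemma nonunits_quasi_prime_d : quasi_prime V (star_f V (@d_op K)) (nonunits V).
Proof. by apply: nonunits_quasi_prime => [G _ //|x _ [G [_ GQ Gx]]]; apply: GQ. Qed.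

Lemma nonunits_quasi_prime_t : quasi_prime V (star_f V (t_op V)) (nonunits V).
Proof.
apply: nonunits_quasi_prime.
  by move=> G fG g Gg; exists G; split => // e Ce; rewrite mulrC; exact: Ce.
move=> x Vx [G [fG GQ [G' [fG' G'G vx]]]].
by apply: (nonunits_v_op vV fG' _ Vx vx) => z /G'G; exact: GQ.
Qed.

Lemma nonunits_quasi_prime_ell : quasi_prime V (star_f V (ell_op D star V)) (nonunits V).
Proof.
have hV := proj1 vV; have [_ lV _] := dV.
apply: nonunits_quasi_prime.
  move=> G fG g Gg P' [[[P'D [hP' _]] _] Pp']; rewrite -[g]mulr1; apply: mulset1 => //.
  exists 1, 1; rewrite divr1.
  by split; [exact: subring1|exact: subring1|exact: prime_not1 Pp' hP'|].
move=> x Vx [G [fG GQ ex]]; have [_ _ Qm] := nonunits_submod vV.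
apply: (@mulset_subset _ _ _ _ _ _ _ x (ex P qP)); first exact: nonunits0.
  by case: (nonunits_submod vV).
move=> g f Gg [a [s [Va Ds nPs ->]]].
have Vsi : V s^-1 by apply: lV; exists 1, s; split => //; [exact: subring1|rewrite div1r].
by rewrite mulrC; apply: Qm; [exact: subringM|exact: GQ].
Qed.

End Dominating.

Lemma PstarMD_of_flat (op : kset K -> kset K -> kset K) :
  (forall V P, quasi_prime D (star_f D star) P -> dominating D P V -> valring V ->
     overring D V ->
     flat D star V (op V) /\ quasi_prime V (star_f V (op V)) (nonunits V)) ->
  PstarMD D star.
Proof.
move=> H; apply: PstarMD_of_valring_loc => V P qP dV vV.
have [[[_ [hP _]] _] Pp] := qP.
by have [[_ flV] qpV] := H V P qP dV vV (dominating_overring hD hP Pp dV); exact: flV.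
Qed.

End Converse.

Section Ell.
Variable K : fieldType.
Implicit Types (F T P : kset K) (x : K).
Variables (D : kset K) (star : kset K -> kset K).
Hypotheses (hD : is_subring D) (hstar : semistar D star).

Lemma mulset_frac_fgen T P F : overring D T -> quasi_prime D (star_f D star) P ->
  subset F D -> (exists f, F f /\ ~ P f) ->
  seteq (mulset (mulset F T) (frac T D P)) (mulset T (frac T D P)).
Proof.
move=> [hT DT] [[[PD [hP _]] _] Pp] FD [f [Ff nPf]] x.
set S := frac T D P.
have sS : is_subring S := frac_subring hD hP Pp hT DT.
have Smul t u : T t -> S u -> S (t * u).
  by move=> Tt Su; apply: subringM => //; apply: subset_frac.
have toS A : subset A T -> subset (mulset A S) S.
  move=> AT; apply: mulset_subset; [exact: subring0|exact: subringD|].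
  by move=> a b /AT Ta Sb; apply: Smul.
have FT_T : subset (mulset F T) T.
  apply: mulset_subset; [exact: subring0|exact: subringD|].
  by move=> a b Fa Tb; apply: subringM => //; apply: DT; apply: FD.
have f0 : f != 0 := notin_prime_neq0 hP nPf.
split => h.
  by rewrite -[x]mul1r; apply: mulset1; [exact: subring1|exact: (toS _ FT_T)].
have [a [s [Ta Ds ns ex]]] : S x by apply: (toS T) h.
have s0 : s != 0 := notin_prime_neq0 hP ns.
have -> : x = f * (a / (s * f)) by rewrite ex; field; rewrite f0 s0.
apply: mulset1; first by rewrite -[f]mulr1; apply: mulset1 => //; exact: subring1.
exists a, (s * f); split => //.
  by apply: subringM => //; exact: FD.
by apply: (notin_primeM Pp) => //; exact: FD.
Qed.

Lemma ell_op_linked T : overring D T -> linked D star T (ell_op D star T).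
Proof.
move=> oT F fF FD hF x.
have hE P (qP : quasi_prime D (star_f D star) P) :=
  mulset_frac_fgen oT qP FD (quasi_prime_avoid hD hstar qP fF hF) x.
by split => h P qP; apply/(hE P qP); apply: h.
Qed.

Lemma ell_op_one T : overring D T -> ell_op D star T T 1.
Proof.
move=> [hT DT] P [[[PD [hP _]] _] Pp]; rewrite -[1]mulr1.
by apply: mulset1; [exact: subring1|apply: (subset_frac hD hP Pp); exact: subring1].
Qed.

End Ell.

Lemma t_op_one (K : fieldType) (T : kset K) : is_subring T -> t_op T T 1.
Proof.
move=> hT; exists (span T [:: 1]); split.
- exact: span_fgen (mem_head _ _) (oner_neq0 _).
- apply: span_subset_submod; first by case: (Fbar_self hT).
  by move=> y; rewrite inE => /eqP ->; exact: subring1.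
- move=> e Ce; rewrite mul1r -[e]mulr1; apply: Ce.
  by apply: span_mem; [exact: subring1|rewrite inE].
Qed.

Lemma semistar_d (K : fieldType) (T : kset K) : semistar T (@d_op K).
Proof. by split => [E|x E _ _ y|E F _ _|E _ y|E _ y]. Qed.

Unset Implicit Arguments.
Local Close Scope ring_scope.

Theorem theorem5p7 (K : fieldType) (D : kset K) (star : kset K -> kset K)
  (hD : is_subring D) (hK : is_quotient_field D) (hstar : semistar D star) :
  (PstarMD D star <->
     (forall (T : kset K) (star' : kset K -> kset K),
        overring D T -> semistar T star' -> linked D star T star' ->
        flat D star T star')) /\
  (PstarMD D star <->
     (forall T : kset K, overring D T -> flat D star T (ell_op D star T))) /\
  (PstarMD D star <->
     (forall T : kset K, overring D T -> linked D star T (t_op T) ->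
        flat D star T (t_op T))) /\
  (PstarMD D star <->
     (forall T : kset K, overring D T -> linked D star T (@d_op K) ->
        flat D star T (@d_op K))).
Proof.
have fwd := PstarMD_flat hD hK hstar.
have bwd := PstarMD_of_flat hD hK hstar.
split; [|split; [|split]]; split.
- move=> pmd T star' oT sT; apply: fwd => //.
  by apply: (star_ext sT); [exact: Fbar_self oT.1|exact: subring1 oT.1].
- move=> H; apply: (bwd (fun _ => @d_op K)) => V P qP dV vV oV /=; split.
    by apply: H => //; [exact: semistar_d|apply: (dominating_linked_d hD hstar qP dV)].
  by apply: (nonunits_quasi_prime_d hD qP dV vV).
- move=> pmd T oT; apply: fwd => //.
    exact: (ell_op_one hD oT).
  exact: (ell_op_linked hD hstar oT).
- move=> H; apply: (bwd (ell_op D star)) => V P qP dV vV oV /=.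
  by split; [exact: H|apply: (nonunits_quasi_prime_ell hD qP dV vV)].
- by move=> pmd T oT; apply: fwd => //; exact: t_op_one oT.1.
- move=> H; apply: (bwd (@t_op K)) => V P qP dV vV oV /=; split.
    by apply: H => //; apply: (dominating_linked_t hD hstar qP dV).
  by apply: (nonunits_quasi_prime_t hD qP dV vV).
- by move=> pmd T oT; apply: fwd => //; exact: subring1 oT.1.
- move=> H; apply: (bwd (fun _ => @d_op K)) => V P qP dV vV oV /=; split.
    by apply: H => //; apply: (dominating_linked_d hD hstar qP dV).
  by apply: (nonunits_quasi_prime_d hD qP dV vV).
Qed.
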